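(* The task of estimating (to $\ell_\infty$-precision $\epsilon$, with high probability) the error rates $\pi$ of an $n$-qubit Pauli channel with SPAM governed by retention rates $r_{\mathrm{prep}}, r_{\mathrm{meas}}$ reduces, with a factor $O(n\log(n/\epsilon))$ loss of efficiency, to the task of Individual Recovery of $\mathcal{D}(\mathsf{0}^n)$ under the noise channel $\mathrm{BSC}_{\delta/2}\circ \mathrm{Z}_{1/3}$, where $\delta=1-r_{\mathrm{prep}}\cdot r_{\mathrm{meas}}$.
   Context: An $n$-qubit Pauli channel with error rates $\pi$ (a probability distribution on $\{0,1,2,3\}^n$) is $\rho\mapsto\sum_C\pi(C)\sigma_C\rho\sigma_C^\dagger$, where $\sigma_C=\bigotimes_j\sigma_{C_j}$ with $\sigma_0=I,\sigma_1=\sigma_x,\sigma_2=\sigma_y,\sigma_3=\sigma_z$. SPAM model: an intended prepared single-qubit state $|a\rangle$ is actually $r_{\mathrm{prep}}|a\rangle\langle a|+(1-r_{\mathrm{prep}})\frac12 I$; a single-qubit state $\rho$ measured in an intended basis gives outcomes as if $r_{\mathrm{meas}}\rho+(1-r_{\mathrm{meas}})\frac12 I$ were measured; only single-qubit (unentangled) preparations and measurements are used, and $r_{\mathrm{prep}},r_{\mathrm{meas}}$ are known. Classical channels act independently on each bit of a string. $\mathrm{BSC}_p:\{\mathsf0,\mathsf1\}\to\{\mathsf0,\mathsf1\}$ flips the bit with probability $p$. $\mathrm{Z}_p:\{\mathsf0,\mathsf1\}\to\{\mathsf0,\mathsf1\}$ always maps $\mathsf0\mapsto\mathsf0$ and maps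 $\mathsf1\mapsto\mathsf0$ with probability $p$ (else keeps $\mathsf1$). Individual Recovery of $\mathcal{D}(\mathsf0^n)$ under a channel $\Lambda$: $\mathcal{D}$ is an unknown distribution on $\{\mathsf0,\mathsf1\}^n$, the learner receives independent samples $\Lambda(\mathbf{x})$ with $\mathbf{x}\sim\mathcal{D}$, and must estimate $\mathcal{D}(\mathsf0^n)$ to additive precision $\epsilon$ with high probability. *)

From HB Require Import structures.
From mathcomp Require Import all_boot all_order all_algebra.
From mathcomp Require Import all_classical all_reals all_analysis.
Set Implicit Arguments. Unset Strict Implicit. Unset Printing Implicit Defensive.
Import Order.TTheory GRing.Theory Num.Theory.
Local Open Scope ring_scope.

Definition bits (n : nat) := {ffun 'I_n -> bool}.
(* Pauli strings {0,1,2,3}^n : 0 = I, 1 = X, 2 = Y, 3 = Z *)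
Definition pauli (n : nat) := {ffun 'I_n -> 'I_4}.
Definition zero_bits (n : nat) : bits n := [ffun => false].

Section Defs.
Context {R : realType}.

Definition is_dist (T : finType) (p : {ffun T -> R}) : Prop :=
  (forall x, 0 <= p x) /\ \sum_x p x = 1.

(* single-bit classical channels, as transition kernels K x y = P(out = y | in = x) *)
Definition bsc (p : R) (x y : bool) : R := if x == y then 1 - p else p.
Definition zch (p : R) (x y : bool) : R :=
  if x then (if y then 1 - p else p) else (if y then 0 else 1).
Definition comp_bit (K2 K1 : bool -> bool -> R) (x y : bool) : R :=
  \sum_(z : bool) K1 x z * K2 z y.
Definition noise_IR (delta : R) : bool -> bool -> R :=
  comp_bit (bsc (delta / 2)) (zch (1 / 3)).
Definition chan_out (n : nat) (K : bool -> bool -> R) (D : {ffun bits n -> R})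
  (y : bits n) : R :=
  \sum_(x : bits n) D x * \prod_(i < n) K (x i) (y i).

(* A (randomized) Individual Recovery algorithm for D(0^n) using m samples:
   a random seed s ~ w on 'I_k and an estimator est s applied to the m samples. *)
Definition IR_alg_ok (n : nat) (delta eps : R) (m k : nat) (w : {ffun 'I_k -> R})
  (est : 'I_k -> {ffun 'I_m -> bits n} -> R) : Prop :=
  is_dist w /\
  forall D : {ffun bits n -> R}, is_dist D ->
    2 / 3 <= \sum_(s < k) w s *
      \sum_(S : {ffun 'I_m -> bits n} | `|est s S - D (zero_bits n)| <= eps)
        \prod_(t < m) chan_out (noise_IR delta) D (S t).

(* single-qubit states / measurement axes as Bloch vectors *)
Definition bloch := {ffun 'I_3 -> R}.
Definition unit_bloch (v : bloch) : Prop := \sum_(i < 3) v i ^+ 2 = 1.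
Definition bdot (u v : bloch) : R := \sum_(i < 3) u i * v i.
(* Bloch vector of sigma_a rho sigma_a, for rho with Bloch vector v *)
Definition pauli_conj (a : 'I_4) (v : bloch) : bloch :=
  [ffun i : 'I_3 => if (val a == 0%N) || (val a == (val i).+1) then v i else - v i].
(* Probability of outcome o (false = "+u", true = "-u") when the intended state
   with Bloch vector v is prepared (retention rp), the Pauli sigma_a acts, and
   the qubit is measured in the basis with axis u (retention rm). *)
Definition qubit_prob (rp rm : R) (v u : bloch) (a : 'I_4) (o : bool) : R :=
  (1 + (if o then -1 else 1) * (rm * (bdot u (pauli_conj a (rp *: v))))) / 2.
Definition shot_prob (n : nat) (rp rm : R) (pi : {ffun pauli n -> R})
  (v u : 'I_n -> bloch) (o : bits n) : R :=
  \sum_(C : pauli n) pi C * \prod_(j < n) qubit_prob rp rm (v j) (u j) (C j) (o j).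

(* A (randomized) Pauli error-rate estimation protocol with N channel uses, using
   single-qubit preparations/measurements: seed s ~ w, shot t prepares qubit j in
   the pure state with Bloch vector v s t j and measures along u s t j; the
   estimate g s O of pi must be eps-close in l_infty with probability >= 2/3. *)
Definition pauli_alg_ok (n : nat) (rp rm eps : R) (N k : nat) (w : {ffun 'I_k -> R})
  (v u : 'I_k -> 'I_N -> 'I_n -> bloch)
  (g : 'I_k -> {ffun 'I_N -> bits n} -> {ffun pauli n -> R}) : Prop :=
  is_dist w /\
  (forall s t j, unit_bloch (v s t j) /\ unit_bloch (u s t j)) /\
  forall pi : {ffun pauli n -> R}, is_dist pi ->
    2 / 3 <= \sum_(s < k) w s *
      \sum_(O : {ffun 'I_N -> bits n} | [forall C : pauli n, `|g s O C - pi C| <= eps])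
        \prod_(t < N) shot_prob rp rm pi (v s t) (u s t) (O t).

End Defs.

From HB Require Import structures.
From mathcomp Require Import all_boot all_order all_algebra.
From mathcomp Require Import all_classical all_reals all_analysis.
From mathcomp Require Import ring lra zify.
Import Order.TTheory GRing.Theory Num.Theory.
Local Open Scope ring_scope.
Set Implicit Arguments. Unset Strict Implicit. Unset Printing Implicit Defensive.

(* Prepare every qubit in the +1 eigenstate of a uniformly random Pauli axis
   and measure it along the same axis.  For a fixed Pauli string C, flip each
   outcome bit whose axis anticommutes with C: the relabelled outcome is then
   exactly BSC_{delta/2} o Z_{1/3} applied to the bit string x_q = [C'_q <> C_q],
   C' ~ pi, whose law D_C satisfies D_C(0^n) = pi(C).  Hence a block of m shots,
   relabelled for C, is a valid input for the Individual Recovery algorithm.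
   Running r = 48n independent blocks and taking, for every C at once, the
   median of the block estimates, the moment bound E[prod_i (2 - [block i good])]
   <= (4/3)^r shows that a failing majority has probability at most (8/9)^(24n);
   a union bound over the 4^n Pauli strings concludes. *)

Section Median.
Variable R : realDomainType.

(* The largest value lying below a strict majority of the values; the fold
   starts at [0], so the result is never negative. *)
Definition median r (f : 'I_r -> R) : R :=
  \big[Num.max/0]_(j < r | (r < 2 * #|[set i | (f j <= f i)%R]|)%N) f j.

Lemma median_close r (f : 'I_r -> R) t eps : 0 <= t + eps ->
  (r < 2 * #|[set i | (`|f i - t| <= eps)%R]|)%N -> `|median f - t| <= eps.
Proof.
set G := [set i | _] => t_eps_ge0 G_major.
have G_compl := cardsC G; rewrite card_ord in G_compl.
have median_le : median f <= t + eps.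
  apply: (big_rec (fun y => y <= t + eps)) => // j y j_major y_le.
  rewrite ge_max y_le andbT leNgt; apply/negP => fj_gt.
  have : [set i | (f j <= f i)%R] \subset ~: G.
    apply/fintype.subsetP => i; rewrite !inE => fij; rewrite -ltNge.
    by rewrite (lt_le_trans _ (ler_norm _)) //; lra.
  move/subset_leq_card; lia.
have median_ge : t - eps <= median f.
  have /card_gt0P[j0 Gj0] : (0 < #|G|)%N by lia.
  have [j Gj min_j] := @arg_minP _ _ _ j0 (fun i => i \in G) f Gj0.
  have j_major : (r < 2 * #|[set i | (f j <= f i)%R]|)%N.
    have : G \subset [set i | (f j <= f i)%R] by apply/fintype.subsetP => i Gi; rewrite inE min_j.
    move/subset_leq_card; lia.
  rewrite /median (bigD1 j) //= le_max; apply/orP; left.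
  by move: Gj; rewrite inE ler_norml => /andP[]; lra.
by rewrite ler_norml; apply/andP; split; lra.
Qed.

End Median.

Lemma prod_two_sub_indicator (R : numDomainType) r (A : {set 'I_r}) :
  \prod_(i < r) (2 - (i \in A)%:R : R) = 2 ^+ (r - #|A|).
Proof.
rewrite (bigID (mem A)) /= big1 => [|i ->]; last by rewrite mulr2n addrK.
rewrite mul1r (eq_bigr (fun=> 2)) => [|i /negbTE ->]; last by rewrite subr0.
have A_compl := cardC (mem A); rewrite card_ord in A_compl.
rewrite prodr_const; congr (_ ^+ _).
by rewrite -[X in _ = (X - _)%N]A_compl addKn; apply: eq_card => i; rewrite !inE.
Qed.

Lemma four_pow_mul_eight_ninths_pow_le (R : realFieldType) n : (0 < n)%N ->
  (4 ^ n)%:R * (8/9 : R) ^+ (24 * n) <= 1/3.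
Proof.
move=> n_gt0; rewrite natrX exprM -exprMn.
have x_le : 4%:R * (8/9 : R) ^+ 24 <= 1/3 by rewrite !exprS expr0; lra.
have x_ge0 : 0 <= 4%:R * (8/9 : R) ^+ 24 by rewrite !exprS expr0; lra.
case: n n_gt0 => // n _; rewrite exprS.
apply: le_trans _ x_le; rewrite -[leRHS]mulr1 ler_wpM2l // exprn_ile1 //; lra.
Qed.

Section Reduction.
Variable R : realType.

Definition axis (b : 'I_3) : @bloch R := [ffun i => (i == b)%:R].

(* [axis b] is the +1 eigenstate of the Pauli [b.+1]; [pauli_comm a b] says that
   sigma_a commutes with it, i.e. that [pauli_conj a] fixes Bloch component [b]. *)
Definition pauli_comm (a : 'I_4) (b : 'I_3) : bool := (val a == 0%N) || (val a == b.+1).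

Lemma unit_bloch_axis b : unit_bloch (axis b).
Proof.
rewrite /unit_bloch (bigD1 b) //= big1 => [|i /negbTE ib]; last by rewrite ffunE ib expr0n.
by rewrite ffunE eqxx expr1n addr0.
Qed.

Lemma qubit_prob_axis (rp rm : R) b a o :
  qubit_prob rp rm (axis b) (axis b) a o =
  (1 + (-1) ^+ (o (+) ~~ pauli_comm a b) * (rm * rp)) / 2.
Proof.
rewrite /qubit_prob /bdot (bigD1 b) //= big1 => [|i /negbTE ib]; last by rewrite ffunE ib mul0r.
have scale1 : rp *: (1 : R) = rp := mulr1 rp.
rewrite !ffunE eqxx scale1 /pauli_comm; case: o; case: ifP => _ /=; ring.
Qed.

Lemma qubit_prob_axis_ge0 (rp rm : R) b a o : 0 <= rp <= 1 -> 0 <= rm <= 1 ->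
  0 <= qubit_prob rp rm (axis b) (axis b) a o.
Proof.
move=> /andP[rp0 rp1] /andP[rm0 rm1].
have : rm * rp <= 1 by apply: mulr_ile1.
have : 0 <= rm * rp by apply: mulr_ge0.
by rewrite qubit_prob_axis; case: (_ (+) _); rewrite ?expr0 ?expr1; lra.
Qed.

(* If sigma_a <> sigma_c, exactly one of the three axes commutes with both or
   anticommutes with both: this is the 1/3 of [Z_{1/3}]. *)
Lemma avg_axis_qubit_prob (rp rm : R) (a c : 'I_4) (o : bool) :
  \sum_(b < 3) 1/3 * qubit_prob rp rm (axis b) (axis b) a (o (+) ~~ pauli_comm c b)
  = noise_IR (1 - rp * rm) (a != c) o.
Proof.
under eq_bigr do rewrite qubit_prob_axis.
rewrite /noise_IR /comp_bit big_bool !big_ord_recr big_ord0 /= /zch /bsc /pauli_comm.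
by case: a => [[|[|[|[|a]]]] ?] //; case: c => [[|[|[|[|c]]]] ?] //; case: o => /=; field.
Qed.

Definition pushforward (T U : finType) (f : T -> U) (p : {ffun T -> R}) : {ffun U -> R} :=
  [ffun y => \sum_(x | f x == y) p x].

Lemma sum_pushforward (T U : finType) (f : T -> U) (p : {ffun T -> R}) (G : U -> R) :
  \sum_y pushforward f p y * G y = \sum_x p x * G (f x).
Proof.
rewrite (partition_big f predT) //=; apply: eq_bigr => y _.
by rewrite ffunE mulr_suml; apply: eq_bigr => x /eqP->.
Qed.

Lemma is_dist_pushforward (T U : finType) (f : T -> U) (p : {ffun T -> R}) :
  is_dist p -> is_dist (pushforward f p).
Proof.
case=> p_ge0 p_sum1; split=> [y|].
  by rewrite ffunE; apply: sumr_ge0.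
have := sum_pushforward f p (fun=> 1).
by under eq_bigr do rewrite mulr1; under [RHS]eq_bigr do rewrite mulr1; rewrite p_sum1.
Qed.

Lemma chan_out_pushforward n (T : finType) (K : bool -> bool -> R) (f : T -> bits n)
    (p : {ffun T -> R}) y :
  chan_out K (pushforward f p) y = \sum_x p x * \prod_(i < n) K (f x i) (y i).
Proof. exact: (sum_pushforward f p (fun x => \prod_(i < n) K (x i) (y i))). Qed.

Lemma sum_chan_out n (K : bool -> bool -> R) (D : {ffun bits n -> R}) :
  (forall x, \sum_y K x y = 1) -> \sum_y chan_out K D y = \sum_x D x.
Proof.
move=> K_sum1; rewrite exchange_big /=; apply: eq_bigr => x _.
rewrite -mulr_sumr -(bigA_distr_bigA (fun i b => K (x i) b)) /=.
by rewrite big1 ?mulr1 // => i _; rewrite K_sum1.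
Qed.

Lemma noise_IR_sum1 (delta : R) x : \sum_y noise_IR delta x y = 1.
Proof.
by rewrite big_bool /noise_IR /comp_bit !big_bool /zch /bsc; case: x => /=; field.
Qed.

Lemma sum_ffun_prod (I T : finType) (F : T -> R) :
  \sum_(f : {ffun I -> T}) \prod_i F (f i) = (\sum_x F x) ^+ #|I|.
Proof. by rewrite -(bigA_distr_bigA (fun _ => F)) prodr_const. Qed.

Lemma sum_iid_samples (m n : nat) delta (D : {ffun bits n -> R}) : is_dist D ->
  \sum_(S : {ffun 'I_m -> bits n}) \prod_(j < m) chan_out (noise_IR delta) D (S j) = 1.
Proof.
case=> _ D_sum1; rewrite sum_ffun_prod sum_chan_out ?D_sum1 ?expr1n // => x.
exact: noise_IR_sum1.
Qed.

Section Shot.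
Variable n : nat.

Lemma sum_uniform_axes : \sum_(be : {ffun 'I_n -> 'I_3}) \prod_(q < n) (1/3 : R) = 1.
Proof.
rewrite (sum_ffun_prod _ (fun=> 1/3)) sumr_const card_ord -[_ *+ 3]mulr_natr.
by rewrite mulrC mulrA mulr1 mulfV ?expr1n.
Qed.

Definition axis_states (be : {ffun 'I_n -> 'I_3}) (q : 'I_n) : bloch := axis (be q).

Definition pauli_frame (C : pauli n) (be : {ffun 'I_n -> 'I_3}) (o : bits n) : bits n :=
  [ffun q => o q (+) ~~ pauli_comm (C q) (be q)].

Definition pauli_diff (C C' : pauli n) : bits n := [ffun q => C' q != C q].

Lemma pauli_diff_eq0 C C' : (pauli_diff C C' == zero_bits n) = (C' == C).
Proof.
apply/eqP/eqP=> [/ffunP diff0 | ->]; last by apply/ffunP => q; rewrite !ffunE eqxx.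
by apply/ffunP => q; move: (diff0 q); rewrite !ffunE => /negbFE/eqP.
Qed.

Lemma pushforward_diff0 (pi : {ffun pauli n -> R}) C :
  pushforward (pauli_diff C) pi (zero_bits n) = pi C.
Proof. by rewrite ffunE (eq_bigl _ _ (fun C' => pauli_diff_eq0 C C')) big_pred1_eq. Qed.

Lemma avg_axes_shot_prob (rp rm : R) (pi : {ffun pauli n -> R}) (C : pauli n) y :
  \sum_(be : {ffun 'I_n -> 'I_3}) (\prod_(q < n) (1/3 : R)) *
     shot_prob rp rm pi (axis_states be) (axis_states be) (pauli_frame C be y)
  = chan_out (noise_IR (1 - rp * rm)) (pushforward (pauli_diff C) pi) y.
Proof.
rewrite chan_out_pushforward /shot_prob.
under eq_bigr do rewrite mulr_sumr.
rewrite exchange_big /=; apply: eq_bigr => C' _.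
under eq_bigr do rewrite mulrCA -big_split /=.
under eq_bigr do under eq_bigr do rewrite ffunE.
rewrite -mulr_sumr -(bigA_distr_bigA (fun q b =>
  1/3 * qubit_prob rp rm (axis b) (axis b) (C' q) (y q (+) ~~ pauli_comm (C q) b))).
by congr (_ * _); apply: eq_bigr => q _; rewrite avg_axis_qubit_prob ffunE.
Qed.

End Shot.

Section Block.
Variables (n m : nat) (rp rm : R) (pi : {ffun pauli n -> R}).

Local Notation IR_sample_prob C :=
  (chan_out (noise_IR (1 - rp * rm)) (pushforward (pauli_diff C) pi)).

Definition frame_samples (C : pauli n) (bs : {ffun 'I_m -> {ffun 'I_n -> 'I_3}})
  (o : {ffun 'I_m -> bits n}) : {ffun 'I_m -> bits n} :=
  [ffun j => pauli_frame C (bs j) (o j)].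

Lemma frame_samplesK C bs : involutive (frame_samples C bs).
Proof. by move=> o; apply/ffunP => j; apply/ffunP => q; rewrite !ffunE addbK. Qed.

Definition axes_shot_prob (be : {ffun 'I_n -> 'I_3}) (o : bits n) : R :=
  (\prod_(q < n) (1/3 : R)) * shot_prob rp rm pi (axis_states be) (axis_states be) o.

Lemma frame_samples_iid C (H : {ffun 'I_m -> bits n} -> R) :
  \sum_(bs : {ffun 'I_m -> {ffun 'I_n -> 'I_3}}) \sum_(o : {ffun 'I_m -> bits n})
    (\prod_(j < m) axes_shot_prob (bs j) (o j)) * H (frame_samples C bs o)
  = \sum_(S : {ffun 'I_m -> bits n}) (\prod_(j < m) IR_sample_prob C (S j)) * H S.
Proof.
under eq_bigr => bs _ do rewrite (reindex_inj (can_inj (frame_samplesK C bs))) /=.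
under eq_bigr => bs _ do under eq_bigr => S _ do rewrite frame_samplesK.
rewrite exchange_big /=; apply: eq_bigr => S _; rewrite -mulr_suml; congr (_ * _).
rewrite (eq_bigr (fun bs : {ffun 'I_m -> {ffun 'I_n -> 'I_3}} =>
    \prod_j axes_shot_prob (bs j) (pauli_frame C (bs j) (S j)))); last first.
  by move=> bs _; apply: eq_bigr => j _; rewrite ffunE.
rewrite -(bigA_distr_bigA (fun j be => axes_shot_prob be (pauli_frame C be (S j)))).
by apply: eq_bigr => j _; apply: avg_axes_shot_prob.
Qed.

Section Protocol.
Variables (k r : nat) (w : {ffun 'I_k -> R}).

Definition block_seed := ('I_k * {ffun 'I_m -> {ffun 'I_n -> 'I_3}})%type.

Definition block_prob (xi : block_seed) (o : {ffun 'I_m -> bits n}) : R :=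
  w xi.1 * \prod_(j < m) axes_shot_prob (xi.2 j) (o j).

Lemma block_simulates_IR C (H : 'I_k -> {ffun 'I_m -> bits n} -> R) :
  \sum_(xi : block_seed) \sum_o block_prob xi o * H xi.1 (frame_samples C xi.2 o)
  = \sum_(a < k) w a *
      \sum_(S : {ffun 'I_m -> bits n}) (\prod_(j < m) IR_sample_prob C (S j)) * H a S.
Proof.
rewrite -(pair_bigA _ (fun a bs => \sum_o block_prob (a, bs) o * H a (frame_samples C bs o))).
apply: eq_bigr => a _; rewrite -frame_samples_iid mulr_sumr; apply: eq_bigr => bs _.
by rewrite mulr_sumr; apply: eq_bigr => o _; rewrite /block_prob mulrA.
Qed.

Definition protocol_seed := {ffun 'I_r -> block_seed}.
Definition nseeds := #|{: protocol_seed}|.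
Definition nshots := #|{: 'I_r * 'I_m}|.

Definition blocks (O : {ffun 'I_nshots -> bits n}) : {ffun 'I_r -> {ffun 'I_m -> bits n}} :=
  [ffun i => [ffun j => O (enum_rank (i, j))]].
Definition unblocks (O : {ffun 'I_r -> {ffun 'I_m -> bits n}}) : {ffun 'I_nshots -> bits n} :=
  [ffun t => O (enum_val t).1 (enum_val t).2].

Lemma blocksK : cancel blocks unblocks.
Proof. by move=> O; apply/ffunP => t; rewrite !ffunE -surjective_pairing enum_valK. Qed.

Lemma unblocksK : cancel unblocks blocks.
Proof. by move=> O; apply/ffunP => i; apply/ffunP => j; rewrite !ffunE enum_rankK. Qed.

Definition seed_of (s : 'I_nseeds) : protocol_seed := enum_val s.

Definition protocol_weight : {ffun 'I_nseeds -> R} :=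
  [ffun s => \prod_(i < r) (w (seed_of s i).1 * \prod_(j < m) \prod_(q < n) (1/3 : R))].

Definition protocol_axes (s : 'I_nseeds) (t : 'I_nshots) : 'I_n -> bloch :=
  axis_states ((seed_of s (enum_val t).1).2 (enum_val t).2).

Definition run_prob (s : 'I_nseeds) (O : {ffun 'I_nshots -> bits n}) : R :=
  protocol_weight s * \prod_t shot_prob rp rm pi (protocol_axes s t) (protocol_axes s t) (O t).

Lemma run_prob_blocks s O : run_prob s O = \prod_(i < r) block_prob (seed_of s i) (blocks O i).
Proof.
rewrite /run_prob ffunE /block_prob /axes_shot_prob.
under [RHS]eq_bigr do rewrite big_split /= mulrA.
rewrite [RHS]big_split /=; congr (_ * _).
rewrite pair_bigA /= (reindex _ (onW_bij _ (enum_rank_bij _))) /=.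
by apply: eq_bigr => -[i j] _; rewrite /protocol_axes !ffunE enum_rankK.
Qed.

Lemma sum_blocks (Phi : block_seed -> {ffun 'I_m -> bits n} -> R) :
  \sum_(s < nseeds) \sum_(O : {ffun 'I_nshots -> bits n})
     \prod_(i < r) Phi (seed_of s i) (blocks O i)
  = \prod_(i < r) \sum_(xi : block_seed) \sum_o Phi xi o.
Proof.
rewrite bigA_distr_bigA (reindex enum_rank (onW_bij _ (enum_rank_bij _))) /=.
apply: eq_bigr => x _; rewrite /seed_of enum_rankK.
rewrite (reindex unblocks (onW_bij _ (Bijective unblocksK blocksK))) /=.
under eq_bigr do rewrite unblocksK.
by rewrite -(bigA_distr_bigA (fun i o => Phi (x i) o)).
Qed.

Lemma is_dist_protocol_weight : is_dist w -> is_dist protocol_weight.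
Proof.
case=> w_ge0 w_sum1; split=> [s|].
  rewrite ffunE; apply: prodr_ge0 => i _; rewrite mulr_ge0 //.
  by do 2![apply: prodr_ge0 => ? _]; rewrite divr_ge0.
rewrite (reindex enum_rank (onW_bij _ (enum_rank_bij _))) /=.
under eq_bigr do rewrite ffunE /seed_of enum_rankK.
set c := \prod_(j < m) _.
rewrite (sum_ffun_prod _ (fun xi : block_seed => w xi.1 * c)).
rewrite -(pair_bigA _ (fun a _ => w a * c)) /=.
rewrite (eq_bigr (fun a => w a)) ?w_sum1 ?expr1n // => a _.
rewrite -mulr_sumr /c (sum_ffun_prod _ (fun=> \prod_(q < n) (1/3 : R))).
by rewrite sum_uniform_axes !expr1n mulr1.
Qed.

Hypotheses (rp01 : 0 <= rp <= 1) (rm01 : 0 <= rm <= 1).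
Hypotheses (w_dist : is_dist w) (pi_dist : is_dist pi).

Lemma block_prob_ge0 xi o : 0 <= block_prob xi o.
Proof.
rewrite mulr_ge0 ?w_dist.1 //; apply: prodr_ge0 => j _; rewrite mulr_ge0 //.
  by apply: prodr_ge0 => q _; rewrite divr_ge0.
apply: sumr_ge0 => C _; rewrite mulr_ge0 ?pi_dist.1 //.
by apply: prodr_ge0 => q _; apply: qubit_prob_axis_ge0.
Qed.

Lemma sum_block_prob : \sum_xi \sum_o block_prob xi o = 1.
Proof.
have := block_simulates_IR [ffun=> ord0] (fun _ _ => 1).
under eq_bigr do under eq_bigr do rewrite mulr1.
move=> ->; rewrite -[RHS]w_dist.2; apply: eq_bigr => a _.
under eq_bigr do rewrite mulr1.
by rewrite sum_iid_samples ?mulr1 //; apply: is_dist_pushforward.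
Qed.

Lemma run_prob_ge0 s O : 0 <= run_prob s O.
Proof. by rewrite run_prob_blocks; apply: prodr_ge0 => i _; apply: block_prob_ge0. Qed.

Lemma sum_run_prob : \sum_s \sum_O run_prob s O = 1.
Proof.
under eq_bigr do under eq_bigr do rewrite run_prob_blocks.
by rewrite sum_blocks big1 // => i _; apply: sum_block_prob.
Qed.

Section Success.
Variables (est : 'I_k -> {ffun 'I_m -> bits n} -> R) (eps : R) (q : nat).
Hypotheses (est_ok : IR_alg_ok (1 - rp * rm) eps w est) (eps_gt0 : 0 < eps).
Hypothesis r_eq : r = (2 * q)%N.

Definition block_estimate (C : pauli n) (xi : block_seed) o : R :=
  est xi.1 (frame_samples C xi.2 o).

Definition protocol_estimate s O : {ffun pauli n -> R} :=
  [ffun C => median (fun i => block_estimate C (seed_of s i) (blocks O i))].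

Definition block_good C xi o : bool := `|block_estimate C xi o - pi C| <= eps.

Definition good_blocks C s O : {set 'I_r} :=
  [set i | block_good C (seed_of s i) (blocks O i)].

Definition majority_fails C s O : bool := (2 * #|good_blocks C s O| <= r)%N.

Lemma block_good_prob C : 2/3 <= \sum_xi \sum_o block_prob xi o * (block_good C xi o)%:R.
Proof.
have := est_ok.2 _ (is_dist_pushforward (pauli_diff C) pi_dist).
rewrite pushforward_diff0 /block_good /block_estimate.
rewrite (block_simulates_IR C (fun a S => (`|est a S - pi C| <= eps)%R%:R)).
move/le_trans; apply; rewrite le_eqVlt; apply/orP; left; apply/eqP/eq_bigr => a _.
rewrite big_mkcond.
by congr (_ * _); apply: eq_bigr => S _; case: ifP; rewrite ?mulr1 ?mulr0.
Qed.

Lemma block_fail_moment C :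
  \sum_xi \sum_o block_prob xi o * (2 - (block_good C xi o)%:R) <= 4/3.
Proof.
under eq_bigr do under eq_bigr do rewrite mulrBr mulr_natr.
under eq_bigr do rewrite sumrB sumrMnl.
rewrite sumrB sumrMnl sum_block_prob.
by have := block_good_prob C; lra.
Qed.

Lemma majority_fails_prob C :
  \sum_s \sum_O run_prob s O * (majority_fails C s O)%:R <= (8/9) ^+ q.
Proof.
have fails_le s O : (majority_fails C s O)%:R <=
    \prod_i (2 - (block_good C (seed_of s i) (blocks O i))%:R) / 2 ^+ q :> R.
  rewrite (eq_bigr (fun i => 2 - (i \in good_blocks C s O)%:R)); last by move=> i _; rewrite inE.
  rewrite prod_two_sub_indicator /majority_fails.
  case: leqP => [few_good | _]; last by rewrite mulr_ge0 // invr_ge0 exprn_ge0.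
  by rewrite ler_pdivlMr ?exprn_gt0 // mul1r ler_eXn2l ?ltr1n //; lia.
apply: (le_trans (y := (\sum_s \sum_O run_prob s O *
   \prod_i (2 - (block_good C (seed_of s i) (blocks O i))%:R)) / 2 ^+ q)).
  rewrite mulr_suml; apply: ler_sum => s _; rewrite mulr_suml; apply: ler_sum => O _.
  by rewrite -mulrA ler_wpM2l ?run_prob_ge0 ?fails_le.
under eq_bigr do under eq_bigr do rewrite run_prob_blocks -big_split /=.
rewrite (sum_blocks (fun xi o => block_prob xi o * (2 - (block_good C xi o)%:R))).
apply: (le_trans (y := (4/3) ^+ r / 2 ^+ q)).
  rewrite ler_pM2r ?invr_gt0 ?exprn_gt0 // -[r in _ ^+ r]card_ord -prodr_const.
  apply: ler_prod => i _; rewrite block_fail_moment andbT.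
  do 2![apply: sumr_ge0 => ? _]; rewrite mulr_ge0 ?block_prob_ge0 //.
  by case: (block_good _ _ _); rewrite /= ?subr0 ?mulr2n ?addrK.
by rewrite r_eq exprM -expr_div_n; apply: lerXn2r; rewrite ?nnegrE; lra.
Qed.

Lemma estimate_ok_or_majority_fails s O :
  1 - \sum_C (majority_fails C s O)%:R <=
    ([forall C, `|protocol_estimate s O C - pi C| <= eps])%:R :> R.
Proof.
have fails_ge0 (P : pred (pauli n)) : 0 <= \sum_(C | P C) (majority_fails C s O)%:R :> R.
  exact: sumr_ge0.
case: (boolP [forall C, _]) => [_ | /forallPn [C estC_far]].
  by have := fails_ge0 predT; rewrite /= mulr1n; lra.
have failsC : majority_fails C s O.
  rewrite /majority_fails leqNgt; apply: contra estC_far => many_good.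
  rewrite ffunE median_close // addr_ge0 ?pi_dist.1 //; exact: ltW.
by rewrite (bigD1 C) //= failsC mulr1n; have := fails_ge0 (fun C1 => C1 != C); lra.
Qed.

Lemma protocol_success_prob :
  1 - (4 ^ n)%:R * (8/9) ^+ q <=
  \sum_s protocol_weight s *
    \sum_(O | [forall C, `|protocol_estimate s O C - pi C| <= eps])
      \prod_t shot_prob rp rm pi (protocol_axes s t) (protocol_axes s t) (O t).
Proof.
rewrite [X in _ <= X](_ : _ = \sum_s \sum_O run_prob s O *
    ([forall C, `|protocol_estimate s O C - pi C| <= eps])%:R); last first.
  apply: eq_bigr => s _; rewrite big_mkcond mulr_sumr; apply: eq_bigr => O _.
  by rewrite /run_prob; case: ifP; rewrite ?mulr1 ?mulr0.
apply: (le_trans (y := \sum_s \sum_O run_prob s O * (1 - \sum_C (majority_fails C s O)%:R))).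
  under eq_bigr do under eq_bigr do rewrite mulrBr mulr1 mulr_sumr.
  under eq_bigr do rewrite sumrB exchange_big.
  rewrite sumrB sum_run_prob exchange_big lerD2l lerN2.
  apply: le_trans (ler_sum _ (fun C _ => majority_fails_prob C)) _.
  by rewrite sumr_const card_ffun !card_ord (mulr_natl _ (4 ^ n)).
apply: ler_sum => s _; apply: ler_sum => O _; rewrite ler_wpM2l ?run_prob_ge0 //.
exact: estimate_ok_or_majority_fails.
Qed.

End Success.
End Protocol.
End Block.
End Reduction.

Theorem theorem3p4 :
  exists K : nat,
  forall (R : realType) (n m : nat) (eps rp rm : R),
    (0 < n)%N -> 0 < eps < 1 -> 0 <= rp <= 1 -> 0 <= rm <= 1 ->
    (exists (k : nat) (w : {ffun 'I_k -> R}) (est : 'I_k -> {ffun 'I_m -> bits n} -> R),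
        @IR_alg_ok R n (1 - rp * rm) eps m k w est) ->
    exists (N k : nat) (w : {ffun 'I_k -> R}) (v u : 'I_k -> 'I_N -> 'I_n -> bloch)
           (g : 'I_k -> {ffun 'I_N -> bits n} -> {ffun pauli n -> R}),
      (N%:R <= K%:R * n%:R * (1 + ln (n%:R / eps)) * m%:R :> R) /\
      @pauli_alg_ok R n rp rm eps N k w v u g.
Proof.
exists 48%N => R n m eps rp rm n_gt0 /andP[eps_gt0 eps_lt1] rp01 rm01 [k [w [est est_ok]]].
pose q := (24 * n)%N; pose r := (2 * q)%N.
exists (nshots m r), (nseeds n m k r), (protocol_weight n m r w),
  (@protocol_axes R n m k r), (@protocol_axes R n m k r), (protocol_estimate est).
split; last split; last split.
- have log_ge1 : 1 <= 1 + ln (n%:R / eps) :> R.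
    by rewrite lerDl ln_ge0 // ler_pdivlMr // mul1r (le_trans (ltW eps_lt1)) // ler1n.
  rewrite /nshots card_prod !card_ord (_ : (r * m = 48 * n * m)%N); last by rewrite /r /q; lia.
  rewrite !natrM ler_wpM2r // -[leLHS]mulr1 ler_wpM2l //.
- exact: is_dist_protocol_weight est_ok.1.
- by move=> s t j; split; apply: unit_bloch_axis.
move=> pi pi_dist.
apply: le_trans (protocol_success_prob rp01 rm01 est_ok.1 pi_dist est_ok eps_gt0 (erefl r)).
by have := four_pow_mul_eight_ninths_pow_le R n_gt0; lra.
Qed.
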